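(* Let $T$ be a rooted tree on vertex set $[n]$ and let $p\in[n]^n$ be a prime parking function on $T$. Then the final driver (driver $n$) parks at the root of $T$.
   Context: Edges of $T$ are oriented towards the root. For $p\in[n]^n$, drivers $1,\dots,n$ arrive in order; driver $i$ parks at $p_i$ if unoccupied, otherwise follows the directed path towards the root and parks at the first unoccupied vertex, leaving if none exists. $(T,p)$ is a parking function if all drivers park. $T_v$ is the set of vertices with a directed path to $v$ (including $v$); the parking function $(T,p)$ is prime if $|T_v|<|\{i:p_i\in T_v\}|$ for every non-root vertex $v$. *)

From mathcomp Require Import all_boot.
Set Implicit Arguments. Unset Strict Implicit. Unset Printing Implicit Defensive.

(* A rooted tree on vertex set [n] (encoded as 'I_n) is given by its root r
   and its parent map par : each non-root vertex v has the directed edge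
   v -> par v (edges oriented towards the root); par r = r is a dummy
   self-loop at the root, and every vertex reaches the root. *)
Definition rooted_tree (n : nat) (par : 'I_n -> 'I_n) (r : 'I_n) : Prop :=
  par r = r /\ forall v : 'I_n, fconnect par v r.

Definition subtree (n : nat) (par : 'I_n -> 'I_n) (v : 'I_n) : {set 'I_n} :=
  [set u | fconnect par u v].

(* Spot where a driver preferring v parks given occupied set occ:
   the first unoccupied vertex along the directed path v, par v, ..., root
   (orbit par v), or None if all are occupied (the driver leaves). *)
Definition park_spot (n : nat) (par : 'I_n -> 'I_n) (occ : {set 'I_n}) (v : 'I_n)
  : option 'I_n :=
  ohead [seq u <- orbit par v | u \notin occ].

Definition park_step (n : nat) (par : 'I_n -> 'I_n)
  (st : {set 'I_n} * seq (option 'I_n)) (a : 'I_n) :=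
  let o := park_spot par st.1 a in
  (if o is Some w then w |: st.1 else st.1, rcons st.2 o).

(* outcomes par p : the list, in driver order 1..n (indices 0..n-1), of the
   spots where the drivers park (None = driver leaves). *)
Definition outcomes (n : nat) (par : 'I_n -> 'I_n) (p : 'I_n -> 'I_n)
  : seq (option 'I_n) :=
  (foldl (park_step par) (set0, [::]) [seq p i | i <- enum 'I_n]).2.

Definition parking_function (n : nat) (par : 'I_n -> 'I_n) (p : 'I_n -> 'I_n) : Prop :=
  all (fun o => o != None) (outcomes par p).

Definition prime_parking_function (n : nat) (par : 'I_n -> 'I_n) (r : 'I_n)
  (p : 'I_n -> 'I_n) : Prop :=
  parking_function par p /\
  forall v : 'I_n, v != r ->
    #|subtree par v| < #|[set i : 'I_n | p i \in subtree par v]|.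

From mathcomp Require Import all_boot zify.
Set Implicit Arguments. Unset Strict Implicit. Unset Printing Implicit Defensive.

(* Suppose the last driver parks at x <> r.  Then x is free before that
   driver arrives, so every earlier driver preferring a vertex of T_x meets a
   free spot on its way to x and parks in T_x, though not at x itself.  Hence
   at most |T_x| - 1 earlier drivers prefer T_x, and at most |T_x| drivers in
   all, against primality at x. *)

Lemma card_preim_count (T : finType) (T' : eqType) (f : T -> T') (A : {pred T'}) :
  #|[set i | f i \in A]| = count (mem A) [seq f i | i <- enum T].
Proof.
rewrite cardsE count_map cardE /enum_mem size_filter count_filter.
by apply: eq_count => i; rewrite /= andbT.
Qed.

Lemma ohead_filter_traject_connect (T : finType) (f : T -> T) (P : pred T) x k y w :
  ohead [seq u <- traject f x k | P u] = Some y ->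
  w \in traject f x k -> P w -> fconnect f y w.
Proof.
elim: k x => [|k IHk] x //=; case Px: (P x) => /=.
  case=> <- w_traj _; case/trajectP: (w_traj : w \in traject f x k.+1) => i _ ->.
  exact: fconnect_iter.
move=> first_y; rewrite in_cons => /orP[/eqP -> | w_traj]; first by rewrite Px.
exact: IHk first_y w_traj.
Qed.

Section Parking.

Variables (n : nat) (par : 'I_n -> 'I_n).

Definition park_state (s : seq 'I_n) := foldl (park_step par) (set0, [::]) s.

Lemma park_state_rcons s a : park_state (rcons s a) = park_step par (park_state s) a.
Proof. exact: foldl_rcons. Qed.

Lemma park_spot_notin occ v y : park_spot par occ v = Some y -> y \notin occ.
Proof.
rewrite /park_spot; case free: [seq _ <- _ | _] => [|u s] //= [<-].
by have := mem_head u s; rewrite -free mem_filter => /andP[].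
Qed.

Lemma park_spot_subtree occ v w y :
  park_spot par occ v = Some y -> v \in subtree par w -> w \notin occ ->
  y \in subtree par w.
Proof.
rewrite !inE fconnect_orbit => spot_y w_orbit w_free.
exact: ohead_filter_traject_connect spot_y w_orbit w_free.
Qed.

Definition all_parked (os : seq (option 'I_n)) := all (fun o => o != None) os.

Lemma count_subtree_le_occupied w s :
  w \notin (park_state s).1 -> all_parked (park_state s).2 ->
  count (mem (subtree par w)) s <= #|(park_state s).1 :&: subtree par w|.
Proof.
elim/last_ind: s => [|s a IHs] //.
rewrite park_state_rcons /park_step /all_parked all_rcons /= -cats1 count_cat /= addn0.
set occ := (park_state s).1; case spot: park_spot => [y|] //= w_free parked.
have w_free_before : w \notin occ by apply: contra w_free; rewrite in_setU1 orbC => ->.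
have {}IHs := IHs w_free_before parked.
case a_sub: (a \in subtree par w); last first.
  by rewrite addn0; apply: leq_trans IHs (subset_leq_card (setSI _ (subsetUr _ _))).
have y_sub : y \in subtree par w by apply: park_spot_subtree spot a_sub w_free_before.
rewrite setIUl (setIidPl _) ?sub1set // cardsU1 in_setI (negbTE (park_spot_notin spot)).
by rewrite addn1 add1n ltnS.
Qed.

Lemma count_subtree_lt_card w s :
  w \notin (park_state s).1 -> all_parked (park_state s).2 ->
  count (mem (subtree par w)) s < #|subtree par w|.
Proof.
move=> w_free parked; apply: leq_ltn_trans (count_subtree_le_occupied w_free parked) _.
apply: proper_card; rewrite properEneq subsetIr andbT.
have w_sub : w \in subtree par w by rewrite inE connect0.
by apply/eqP => /setIidPr/subsetP/(_ w w_sub); apply/negP.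
Qed.

End Parking.

Theorem proposition4p3 (n : nat) (par : 'I_n -> 'I_n) (r : 'I_n)
  (p : 'I_n -> 'I_n) :
  rooted_tree par r -> prime_parking_function par r p ->
  last None (outcomes par p) = Some r.
Proof.
move=> _ [parked crowded].
have [t [a prefs]] : exists t a, [seq p i | i <- enum 'I_n] = rcons t a.
  case/lastP E: [seq p i | i <- enum 'I_n] => [|t a]; last by exists t, a.
  by have := ltn_ord r; rewrite -[n in _ < n](size_enum_ord n) -(size_map p) E.
move: parked; rewrite /parking_function /outcomes prefs -/(park_state par _).
rewrite park_state_rcons /park_step all_rcons last_rcons /=.
case spot: park_spot => [x|] //= parked_t.
have [-> // | x_ne_r] := eqVneq x r; exfalso.
have := crowded x x_ne_r; rewrite card_preim_count prefs -cats1 count_cat /=.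
have := count_subtree_lt_card (park_spot_notin spot) parked_t.
by case: (a \in _) => /=; lia.
Qed.
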